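(* In the standing setting below, let $x'\in\mathbb{X}$, $y_0,y_1\in\mathbb{Y}$ with $y_0\ne y_1$, $f_i(x)=-c(x,y_i)+c(x',y_i)$ for $i=0,1$, and $S=\{x\in\mathbb{X}: f_0(x)\le f_1(x)\}$. Then the interior of $S$ is contained in $\{x\in\mathbb{X}: f_0(x)<f_1(x)\}$, and the boundary $\partial S$ contains $\{x\in\mathbb{X}: f_0(x)=f_1(x)\}$.
   Context: Standing setting: $\mathbb{X},\mathbb{Y}\subset\mathbb{R}^n$ are compact with non-empty interior; $c:\mathbb{X}\times\mathbb{Y}\to\mathbb{R}$ has continuous $D_xc$, $D_yc$, and continuous mixed second derivatives with $D^2_{xy}c=(D^2_{yx}c)^T$; for each $x$ the map $y\mapsto -D_xc(x,y)$ is injective on $\mathbb{Y}$ and for each $y$ the map $x\mapsto -D_yc(x,y)$ is injective on $\mathbb{X}$; $D^2_{xy}c(x,y)$ is invertible everywhere; for every $y$ the set $\{-D_yc(x,y):x\in\mathbb{X}\}$ is convex and for every $x$ the set $\{-D_xc(x,y):y\in\mathbb{Y}\}$ is convex. Interior and boundary are taken in $\mathbb{R}^n$. *)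

From HB Require Import structures.
From mathcomp Require Import all_boot all_order all_algebra.
From mathcomp Require Import all_classical all_reals all_analysis.
Set Implicit Arguments. Unset Strict Implicit. Unset Printing Implicit Defensive.
Import Order.TTheory GRing.Theory Num.Theory.
Import numFieldNormedType.Exports.
Local Open Scope classical_set_scope.
Local Open Scope ring_scope.

Section Defs.
Variables (R : realType) (n : nat).
Local Notation V := 'rV[R]_n.

Definition ev (i : 'I_n) : V := delta_mx 0 i.

Definition boundary (A : set V) : set V := closure A `\` interior A.

Definition Dxc (c : V -> V -> R) (x y : V) : V :=
  \row_(i < n) 'D_(ev i) (fun z => c z y) x.
Definition Dyc (c : V -> V -> R) (x y : V) : V :=
  \row_(i < n) 'D_(ev i) (fun w => c x w) y.

(* D^2_{xy} c : (i,j) entry = d/dy_j d/dx_i c ;  D^2_{yx} c : (i,j) = d/dx_j d/dy_i c *)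
Definition Dxyc (c : V -> V -> R) (x y : V) : 'M[R]_n :=
  \matrix_(i < n, j < n) 'D_(ev j) (fun w => 'D_(ev i) (fun z => c z w) x) y.
Definition Dyxc (c : V -> V -> R) (x y : V) : 'M[R]_n :=
  \matrix_(i < n, j < n) 'D_(ev j) (fun z => 'D_(ev i) (fun w => c z w) y) x.

Definition XY (X Y : set V) : set (V * V) := [set p | X p.1 /\ Y p.2].

(* The standing setting of the paper.  c is given as a function on
   R^n x R^n; only its behaviour on X x Y is constrained. *)
Definition standing_setting (X Y : set V) (c : V -> V -> R) : Prop :=
  compact X /\ compact Y /\ interior X !=set0 /\ interior Y !=set0 /\
   (forall x y, X x -> Y y -> differentiable (fun z => c z y) x) /\
   (forall x y, X x -> Y y -> differentiable (fun w => c x w) y) /\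
   {within XY X Y, continuous (fun p => Dxc c p.1 p.2)} /\
   {within XY X Y, continuous (fun p => Dyc c p.1 p.2)} /\
   (forall x y i, X x -> Y y ->
       differentiable (fun w => 'D_(ev i) (fun z => c z w) x) y) /\
   (forall x y i, X x -> Y y ->
       differentiable (fun z => 'D_(ev i) (fun w => c z w) y) x) /\
   {within XY X Y, continuous (fun p => Dxyc c p.1 p.2)} /\
   {within XY X Y, continuous (fun p => Dyxc c p.1 p.2)} /\
   (forall x y, X x -> Y y -> Dxyc c x y = (Dyxc c x y)^T) /\
   (forall x, X x -> {in Y &, injective (fun y => - Dxc c x y)}) /\
   (forall y, Y y -> {in X &, injective (fun x => - Dyc c x y)}) /\
   (forall x y, X x -> Y y -> Dxyc c x y \in unitmx) /\
   (forall y, Y y -> convex_set (M := V) [set - Dyc c x y | x in X]) /\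
   (forall x, X x -> convex_set (M := V) [set - Dxc c x y | y in Y]).

End Defs.

From HB Require Import structures.
From mathcomp Require Import all_boot all_order all_algebra.
From mathcomp Require Import all_classical all_reals all_analysis.
From mathcomp Require Import lra.
Import Order.TTheory GRing.Theory Num.Theory.
Import numFieldNormedType.Exports.
Local Open Scope classical_set_scope.
Local Open Scope ring_scope.

(* At an interior point x of S with f0 x = f1 x, the function
   f1 - f0 = c(., y0) - c(., y1) + const has a local minimum, so its gradient
   vanishes there: D_x c(x, y0) = D_x c(x, y1).  The twist condition then
   forces y0 = y1.  Hence the interior of S misses {f0 = f1}, and that set,
   lying in S, lies in the boundary of S. *)

Lemma derive_at_local_min (R : realType) (V : normedModType R)
    (f : V -> R) (x v : V) :
  derivable f x v -> (\forall y \near x, f x <= f y) -> 'D_v f x = 0.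
Proof.
move=> dfx fx_min.
pose q h : R := h^-1 *: (f (h *: v + x) - f x).
have line_to_x : (fun h : R => h *: v + x) @ 0 --> x.
  rewrite -[x in _ --> x]add0r -[0 : V](scale0r v).
  by apply: cvgD; [apply: cvgZ|]; [exact: cvg_id|exact: cvg_cst|exact: cvg_cst].
have line_min : \forall h \near (0 : R), f x <= f (h *: v + x).
  exact: (line_to_x [set y | f x <= f y]).
have q_within (A : set R) : A `<=` [set h | h != 0] ->
    q @ within A (nbhs 0) --> 'D_v f x.
  move=> A_punctured; apply: cvg_trans dfx; apply: cvg_app.
  exact: within_subset.
have q_right : q @ 0^'+ --> 'D_v f x by apply: q_within => h /gt_eqF/negbT.
have q_left : q @ 0^'- --> 'D_v f x by apply: q_within => h /lt_eqF/negbT.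
apply/eqP; rewrite eq_le; apply/andP; split.
- apply: (cvgr_to_le q_left); near=> h; apply: mulr_le0_ge0.
    by rewrite invr_le0 ltW //; near: h; exact: nbhs_left_lt.
  by rewrite subr_ge0; near: h; apply: filterS line_min => h ? _.
- apply: (cvgr_to_ge q_right); near=> h; apply: mulr_ge0.
    by rewrite invr_ge0 ltW //; near: h; exact: nbhs_right_gt.
  by rewrite subr_ge0; near: h; apply: filterS line_min => h ? _.
Unshelve. all: by end_near. Qed.

Lemma derive_eq_at_local_min_sub (R : realType) (V : normedModType R)
    (f g : V -> R) (x v : V) :
  derivable f x v -> derivable g x v ->
  (\forall y \near x, f x - g x <= f y - g y) -> 'D_v f x = 'D_v g x.
Proof.
move=> dfx dgx fg_min; apply/eqP; rewrite -subr_eq0 -deriveB //.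
by apply/eqP/derive_at_local_min => //; exact: derivableB.
Qed.

Lemma Dxc_eq_at_local_min_sub (R : realType) (n : nat)
    (c : 'rV[R]_n -> 'rV[R]_n -> R) (x y0 y1 : 'rV[R]_n) :
  differentiable (c^~ y0) x -> differentiable (c^~ y1) x ->
  (\forall z \near x, c x y0 - c x y1 <= c z y0 - c z y1) ->
  Dxc c x y0 = Dxc c x y1.
Proof.
move=> dc0 dc1 c01_min; apply/rowP => i; rewrite !mxE.
by apply: derive_eq_at_local_min_sub => //; exact: diff_derivable.
Qed.

Theorem corollary2p20 (R : realType) (n : nat) (X Y : set 'rV[R]_n)
    (c : 'rV[R]_n -> 'rV[R]_n -> R)
    (Hset : standing_setting X Y c)
    (x' y0 y1 : 'rV[R]_n) (Hx' : X x') (Hy0 : Y y0) (Hy1 : Y y1)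
    (Hy01 : y0 <> y1) :
  let f0 := fun x => - c x y0 + c x' y0 in
  let f1 := fun x => - c x y1 + c x' y1 in
  let S := [set x | X x /\ f0 x <= f1 x] in
  interior S `<=` [set x | X x /\ f0 x < f1 x] /\
  [set x | X x /\ f0 x = f1 x] `<=` boundary S.
Proof.
move=> f0 f1 S.
have [_ [_ [_ [_ [c_diff [_ [_ [_ [_ [_ [_ [_ [_ [twist _]]]]]]]]]]]]]] := Hset.
have interior_strict : interior S `<=` [set x | X x /\ f0 x < f1 x].
  move=> x Sx; have [Xx le01] := interior_subset Sx.
  split => //; rewrite lt_neqAle le01 andbT; apply/eqP => eq01.
  apply: Hy01; apply: (twist x Xx); rewrite ?inE //; congr (- _).
  apply: Dxc_eq_at_local_min_sub; [exact: c_diff | exact: c_diff |].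
  near=> z; have [_] : S z by near: z.
  by move: eq01; rewrite /f0 /f1; lra.
split => // x [Xx eq01]; split.
  by apply: subset_closure; split => //; rewrite eq01.
by move=> /interior_strict [_]; rewrite eq01 ltxx.
Unshelve. all: by end_near. Qed.
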